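(* Let $(X,A)$ be an affinity space, let $\tau_A$ be the topology induced by $A$, and for $\lambda>0$ let $\tau_\lambda$ be the topology induced by the thresholded affinity $A^\lambda$. Let $\kappa(\lambda)$ be the number (cardinality) of connected components of $(X,\tau_\lambda)$ and $\kappa_A$ the number of connected components of $(X,\tau_A)$. Then: (a) if $0<\lambda_1<\lambda_2$, then $\tau_{\lambda_1}\subseteq\tau_{\lambda_2}\subseteq\tau_A$; (b) $\lambda\mapsto\kappa(\lambda)$ is nondecreasing on $(0,\infty)$ and $\kappa(\lambda)\le\kappa_A$ for every $\lambda>0$; (c) if $X$ is finite, then there exists $\Lambda>0$ such that for all $\lambda>\Lambda$ we have $\tau_\lambda=\tau_A$ and $\kappa(\lambda)=\kappa_A$.
   Context: An affinity on a set $X$ is a function $A:X\times X\to(0,+\infty]$ such that $A(x_1,x_2)=A(x_2,x_1)$ for all $x_1,x_2\in X$ and $A(x,x)=+\infty$ for all $x\in X$ (values $+\infty$ off the diagonal are allowed); $(X,A)$ is an affinity space. For $x\in X$, $\alpha>0$ let $E(x,\alpha)=\{y\in X:A(x,y)>\alpha\}$. The topology induced by $A$ is $\tau_A=\{U\subseteq X:\ \text{for every } x\in U \text{ there is } \alpha>0 \text{ with } E(x,\alpha)\subseteq U\}$. For $\lambda>0$ the thresholded affinity is $A^\lambda(x,y)=+\infty$ if $A(x,y)>\lambda$ and $A^\lambda(x,y)=A(x,y)$ if $A(x,y)\le\lambda$; it is again an affinity, and $\tau_\lambda$ denotes the topology induced by $A^\lambda$ in the same way. A subset $S$ of a topological space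 is connected if it cannot be covered by two disjoint open sets each meeting $S$; the connected component of $x$ is the union of all connected sets containing $x$. *)

From mathcomp Require Import all_boot all_order all_algebra.
From mathcomp Require Import all_classical all_reals.
From mathcomp Require Import ereal.
Set Implicit Arguments. Unset Strict Implicit. Unset Printing Implicit Defensive.
Import Order.TTheory GRing.Theory Num.Theory.
Local Open Scope classical_set_scope.
Local Open Scope ring_scope.
Local Open Scope ereal_scope.

Definition is_affinity (R : realType) (X : Type) (A : X -> X -> \bar R) : Prop :=
  (forall x y, 0 < A x y) /\ (forall x y, A x y = A y x) /\ (forall x, A x x = +oo).

Definition Eball (R : realType) (X : Type) (A : X -> X -> \bar R) (x : X) (alpha : R)
  : set X := [set y | alpha%:E < A x y].

Definition aff_open (R : realType) (X : Type) (A : X -> X -> \bar R) (U : set X) : Prop :=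
  forall x, U x -> exists alpha : R, (0 < alpha)%R /\ Eball A x alpha `<=` U.

Definition thresh (R : realType) (X : Type) (A : X -> X -> \bar R) (lambda : R)
  : X -> X -> \bar R :=
  fun x y => if lambda%:E < A x y then +oo else A x y.

Definition top_connected (X : Type) (op : set X -> Prop) (S : set X) : Prop :=
  ~ (exists U V : set X, op U /\ op V /\ U `&` V = set0 /\ S `<=` U `|` V /\
        (U `&` S !=set0) /\ (V `&` S !=set0)).

Definition component (X : Type) (op : set X -> Prop) (x : X) : set X :=
  \bigcup_(S in [set S | top_connected op S /\ S x]) S.

Definition components (X : Type) (op : set X -> Prop) : set (set X) :=
  [set C | exists x, C = component op x].

(* Thresholding only enlarges affinities, and in a way that is monotone in the
   threshold: the [a]-ball of [A^l] around [x] is exactly the [min a l]-ball of [A].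
   Hence the topologies [tau_l] increase with [l] and are all coarser than [tau_A];
   coarser topologies have more connected sets, hence larger components, hence at
   most as many of them.  On a finite set, once [l] exceeds every finite value of
   [A] the thresholding does nothing, so [A^l = A]. *)

From mathcomp Require Import all_boot all_order all_algebra.
From mathcomp Require Import all_classical all_reals.
From mathcomp Require Import ereal.
Import Order.TTheory GRing.Theory Num.Theory.
Local Open Scope classical_set_scope.
Local Open Scope ring_scope.
Local Open Scope card_scope.

Section ThresholdedBalls.
Variables (R : realType) (X : Type) (A : X -> X -> \bar R).

Lemma Eball_thresh (l a : R) (x : X) :
  Eball (thresh A l) x a = Eball A x (Num.min a l).
Proof.
apply/seteqP; split=> y; rewrite /Eball /thresh /= EFin_min gt_min;
  by case: ifP; rewrite ?orbT ?orbF ?ltry.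
Qed.

Lemma Eball_le (a b : R) (x : X) : a <= b -> Eball A x b `<=` Eball A x a.
Proof. by move=> ab y; apply: le_lt_trans; rewrite lee_fin. Qed.

Lemma Eball_thresh_le (l1 l2 a : R) (x : X) : l1 <= l2 ->
  Eball (thresh A l2) x a `<=` Eball (thresh A l1) x a.
Proof.
move=> l12; rewrite !Eball_thresh; apply: Eball_le.
by rewrite le_min !ge_min lexx l12 orbT.
Qed.

Lemma Eball_sub_thresh (l a : R) (x : X) : Eball A x a `<=` Eball (thresh A l) x a.
Proof. by rewrite Eball_thresh; apply: Eball_le; rewrite ge_min lexx. Qed.

End ThresholdedBalls.

Lemma aff_open_Eball_sub {R : realType} {X : Type} (B C : X -> X -> \bar R) :
  (forall x a, Eball B x a `<=` Eball C x a) ->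
  forall U, aff_open C U -> aff_open B U.
Proof.
move=> BC U oU x Ux; have [a [a0 aU]] := oU x Ux.
by exists a; split=> //; apply: subset_trans aU.
Qed.

Lemma thresh_id {R : realType} {X : Type} (A : X -> X -> \bar R) (l : R) :
  (forall x y, (l%:E < A x y)%E -> A x y = +oo%E) -> thresh A l = A.
Proof.
by move=> lA; apply/funext=> x; apply/funext=> y; rewrite /thresh; case: ifP => // /lA.
Qed.

Lemma finite_fine_ubound {R : realType} {X : Type} (A : X -> X -> \bar R) :
  finite_set [set: X] -> exists L : R, 0 < L /\ forall x y, fine (A x y) <= L.
Proof.
move=> finX.
have finXX : finite_set [set: X * X] by rewrite -setXTT; apply: finite_setX.
have [F eF] := finite_fsetP.1 (finite_image (fun p => fine (A p.1 p.2)) finXX).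
exists (\big[Num.max/1]_(r <- finmap.enum_fset F) r); split.
  by apply: lt_le_trans (bigmax_ge_id _ _ _ _); apply: ltr01.
move=> x y; apply: (le_bigmax_seq _ _ xpredT id) => //.
have : [set fine (A p.1 p.2) | p in [set: X * X]] (fine (A x y)) by exists (x, y).
by rewrite eF.
Qed.

Section Components.
Context {X : Type} {op : set X -> Prop}.

Lemma top_connected_set1 (x : X) : top_connected op [set x].
Proof.
move=> [U [V [_ [_ [UV [_ [[u [Uu /= ux]] [v [Vv /= vx]]]]]]]]]; subst u v.
by have : (U `&` V) x by []; rewrite UV.
Qed.

Lemma component_refl (x : X) : component op x x.
Proof. by exists [set x]; split=> //; apply: top_connected_set1. Qed.

Lemma component_sup {S : set X} {x : X} :
  top_connected op S -> S x -> S `<=` component op x.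
Proof. by move=> cS Sx y Sy; exists S. Qed.

Lemma top_connected_setI_open {S U V : set X} {p : X} :
  top_connected op S -> op U -> op V -> U `&` V = set0 -> S `<=` U `|` V ->
  S p -> U p -> S `&` V = set0.
Proof.
move=> cS oU oV UV SUV Sp Up; apply/seteqP; split=> // s [Ss Vs]; apply: cS.
by exists U, V; do 4 split=> //; split; [exists p | exists s].
Qed.

Lemma component_connected (x : X) : top_connected op (component op x).
Proof.
move=> [U [V [oU [oV [UV [cUV [[u [Uu [S [cS Sx] Su]]] [v [Vv [T [cT Tx] Tv]]]]]]]]]].
have cover (S' : set X) : top_connected op S' /\ S' x -> S' `<=` U `|` V.
  by move=> S'x y S'y; apply: cUV; exists S'.
have [Ux | Vx] := cUV x (component_refl x).
  have TV0 := top_connected_setI_open cT oU oV UV (cover T (conj cT Tx)) Tx Ux.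
  by have : (T `&` V) v by []; rewrite TV0.
have SUV : S `<=` V `|` U by rewrite setUC; apply: cover.
have SU0 := top_connected_setI_open cS oV oU (etrans (setIC _ _) UV) SUV Sx Vx.
by have : (S `&` U) u by []; rewrite SU0.
Qed.

Lemma component_sym {x y : X} :
  component op x y -> component op y = component op x.
Proof.
move=> xy; have yx : component op x `<=` component op y.
  exact: component_sup (component_connected x) xy.
apply/seteqP; split=> //.
exact: component_sup (component_connected y) (yx _ (component_refl x)).
Qed.

End Components.

Lemma top_connected_coarser {X : Type} {op1 op2 : set X -> Prop} {S : set X} :
  (forall U, op1 U -> op2 U) -> top_connected op2 S -> top_connected op1 S.
Proof.
move=> op12 cS [U [V [oU [oV sep]]]]; apply: cS.
by exists U, V; split; [exact: op12 | split; [exact: op12 |]].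
Qed.

Lemma component_coarser {X : Type} {op1 op2 : set X -> Prop} {x : X} :
  (forall U, op1 U -> op2 U) -> component op2 x `<=` component op1 x.
Proof.
move=> op12 y [S [cS Sx] Sy]; exists S => //.
by split=> //; apply: top_connected_coarser cS.
Qed.

(* Each [op1]-component is the union of the [op2]-components it contains, which
   gives a surjection from [op2]-components onto [op1]-components. *)
Lemma card_components_coarser (X : Type) (op1 op2 : set X -> Prop) :
  (forall U, op1 U -> op2 U) -> components op1 #<= components op2.
Proof.
move=> op12.
apply: card_le_trans (card_image_le (fun C => \bigcup_(y in C) component op1 y) _).
apply: subset_card_le => _ [x ->]; exists (component op2 x); first by exists x.
apply/seteqP; split; last by move=> z xz; exists x => //; apply: component_refl.
by move=> z [y /(component_coarser op12) xy]; rewrite (component_sym xy).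
Qed.

(* [hA] is deliberately unused: none of the affinity axioms is needed. *)
Theorem mainTheorem5 (R : realType) (X : Type) (A : X -> X -> \bar R)
  (hA : is_affinity A) :
  (* (a) *)
  (forall l1 l2 : R, 0 < l1 -> l1 < l2 ->
     (forall U : set X, aff_open (thresh A l1) U -> aff_open (thresh A l2) U) /\
     (forall U : set X, aff_open (thresh A l2) U -> aff_open A U)) /\
  (* (b) *)
  (forall l1 l2 : R, 0 < l1 -> l1 <= l2 ->
     components (aff_open (thresh A l1)) #<= components (aff_open (thresh A l2))) /\
  (forall l : R, 0 < l ->
     components (aff_open (thresh A l)) #<= components (aff_open A)) /\
  (* (c) *)
  (finite_set [set: X] ->
   exists L : R, 0 < L /\
     forall l : R, L < l ->
       (forall U : set X, aff_open (thresh A l) U <-> aff_open A U) /\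
       components (aff_open (thresh A l)) #= components (aff_open A)).
Proof.
have open_mono l1 l2 : l1 <= l2 ->
    forall U, aff_open (thresh A l1) U -> aff_open (thresh A l2) U.
  by move=> l12; apply: aff_open_Eball_sub => x a; apply: Eball_thresh_le.
have open_sub l : forall U, aff_open (thresh A l) U -> aff_open A U.
  by apply: aff_open_Eball_sub => x a; apply: Eball_sub_thresh.
split; first by move=> l1 l2 _ /ltW l12; split; [apply: open_mono | apply: open_sub].
split; first by move=> l1 l2 _ l12; apply/card_components_coarser/open_mono.
split; first by move=> l _; apply/card_components_coarser/open_sub.
move=> /(finite_fine_ubound A) [L [L0 AL]]; exists L; split=> // l Ll.
rewrite thresh_id; first by split=> //; apply: card_eqxx.
move=> x y; case: (A x y) (AL x y) => [r /= rL | // | _].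
  by rewrite lte_fin => /(lt_trans Ll); rewrite ltNge rL.
by rewrite ltNge leNye.
Qed.
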